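(* For every tree sequence $\pi$, the class $\mathcal{T}_\pi$ contains a BFD-tree, and any two BFD-trees in $\mathcal{T}_\pi$ are isomorphic.
   Context: A tree sequence is the degree sequence of some tree; $\mathcal{T}_\pi$ is the set of all trees with degree sequence $\pi$. For a connected graph with a chosen root $v_0$, a child of a vertex $w$ is a neighbor $v$ of $w$ with $\mathrm{dist}(v_0,v)=\mathrm{dist}(v_0,w)+1$. A BFD-ordering with root $v_0$ is a total ordering $\prec$ of the vertices arising from a breadth-first search starting at $v_0$ (so $v_0$ is first and vertices closer to $v_0$ precede vertices farther from $v_0$) such that: (B1) if $w_1\prec w_2$ then $v_1\prec v_2$ for every child $v_1$ of $w_1$ and every child $v_2$ of $w_2$; (B2) if $v\prec u$ then $d(v)\ge d(u)$, where $d$ denotes degree. A BFD-tree is a tree admitting a BFD-ordering for some root. *)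

From mathcomp Require Import all_boot.
Set Implicit Arguments. Unset Strict Implicit. Unset Printing Implicit Defensive.

Section Graphs.
Variable T : finType.

Definition simple_graph (e : rel T) : Prop := symmetric e /\ irreflexive e.

Definition connected (e : rel T) : Prop := forall x y : T, connect e x y.

Definition acyclic (e : rel T) : Prop :=
  forall c : seq T, uniq c -> 3 <= size c -> ~~ cycle e c.

Definition is_tree (e : rel T) : Prop :=
  0 < #|T| /\ simple_graph e /\ connected e /\ acyclic e.

Definition deg (e : rel T) (v : T) : nat := #|[set u | e v u]|.

(* graph distance: length of a shortest walk from x to y
   (only meaningful when y is reachable from x) *)
Definition dist (e : rel T) (x y : T) : nat :=
  find (fun k => [exists p : k.-tuple T, path e x p && (last x p == y)])
       (iota 0 #|T|).

Definition child (e : rel T) (v0 w v : T) : bool :=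
  e w v && (dist e v0 v == (dist e v0 w).+1).

(* total orderings of the vertices are represented as duplicate-free
   enumerations s of all vertices; u precedes v iff u occurs before v in s *)
Definition vertex_ordering (s : seq T) : Prop := uniq s /\ forall v, v \in s.
Definition prec (s : seq T) (u v : T) : bool := index u s < index v s.

(* s is an ordering produced by a breadth-first search from v0:
   v0 is first, vertices closer to v0 precede farther ones, and the
   BFS queue discipline holds (the earliest-visited neighbour of an earlier
   non-root vertex precedes, or equals, that of a later one). *)
Definition bfs_ordering (e : rel T) (v0 : T) (s : seq T) : Prop :=
  [/\ vertex_ordering s, head v0 s = v0,
      (forall u v, prec s u v -> dist e v0 u <= dist e v0 v) &
      (forall u v, u != v0 -> v != v0 -> prec s u v ->
         find (e u) s <= find (e v) s)].

Definition BFD_ordering (e : rel T) (v0 : T) (s : seq T) : Prop :=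
  [/\ bfs_ordering e v0 s,
      (forall w1 w2 v1 v2, prec s w1 w2 -> child e v0 w1 v1 ->
          child e v0 w2 v2 -> prec s v1 v2) &
      (forall v u, prec s v u -> deg e u <= deg e v)].

Definition BFD_tree (e : rel T) : Prop :=
  is_tree e /\ exists v0 s, BFD_ordering e v0 s.

End Graphs.

Definition has_degree_seq (n : nat) (e : rel 'I_n) (pi : seq nat) : Prop :=
  perm_eq [seq deg e v | v <- enum 'I_n] pi.

Definition in_T_pi (pi : seq nat) (e : rel 'I_(size pi)) : Prop :=
  is_tree e /\ @has_degree_seq (size pi) e pi.

Definition tree_sequence (pi : seq nat) : Prop :=
  exists e : rel 'I_(size pi), in_T_pi e.

Definition isomorphic (n : nat) (e1 e2 : rel 'I_n) : Prop :=
  exists f : 'I_n -> 'I_n, bijective f /\ forall x y, e1 x y = e2 (f x) (f y).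

(* Let [pi] be a tree sequence on [n] vertices, [d = d_0 >= ... >= d_(n-1)]
   its nonincreasing rearrangement, and [nchild d i = sum_(k < i) (d_k - [k > 0])].

   Let [v_0, ..., v_(n-1)] be a BFD-ordering of a tree in T_pi.
   By (B2) [deg v_k = d_k]; every non-root vertex has a unique parent (its
   neighbour closer to the root), which is its first neighbour in the
   ordering, so by the BFS condition parent positions are monotone.  Since
   [v_k] has [d_k - [k > 0]] children, the children of [v_0, ..., v_(i-1)]
   are exactly [v_1, ..., v_(nchild d i)]; hence the parent of [v_j] is at
   position [bfd_parent d j], a quantity depending on [pi] only.  Two
   BFD-trees in T_pi are therefore isomorphic by matching positions.

   Existence.  Conversely the graph on [{0, ..., n-1}] joining each [j > 0]
   to [bfd_parent d j] is a tree with degrees [d] in which the natural order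
   is a BFD-ordering. *)

From mathcomp Require Import all_boot.
From mathcomp Require Import zify.
Set Implicit Arguments. Unset Strict Implicit. Unset Printing Implicit Defensive.

Lemma find_le (T : Type) (a : pred T) (s : seq T) x0 i :
  i < size s -> a (nth x0 s i) -> find a s <= i.
Proof. by move=> Hi Ha; rewrite leqNgt; apply/negP=> /(before_find x0); rewrite Ha. Qed.

Lemma find_first (T : eqType) (a : pred T) (s : seq T) x :
  uniq s -> x \in s -> a x -> (forall y, y \in s -> a y -> index x s <= index y s) ->
  find a s = index x s.
Proof.
move=> Us xs ax least; apply/eqP; rewrite eqn_leq; apply/andP; split.
  by apply: (@find_le _ _ _ x); rewrite ?index_mem ?nth_index.
have has_a : has a s by apply/hasP; exists x.
have := least _ (mem_nth x (_ : find a s < size s)) (nth_find x has_a).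
by rewrite index_uniq -?has_find //; apply.
Qed.

Lemma card_count (T : finType) (s : seq T) (P : pred T) :
  uniq s -> (forall x, x \in s) -> #|[set x | P x]| = count P s.
Proof.
move=> Us Hs; rewrite -size_filter -(card_uniqP (filter_uniq P Us)).
by apply: eq_card => x; rewrite inE mem_filter Hs andbT.
Qed.

Lemma count_lt_iota b n : b <= n -> count (fun k => k < b) (iota 0 n) = b.
Proof. by move=> Hb; rewrite -size_filter (filter_iota_ltn 0 Hb) size_iota. Qed.

Lemma count_interval a b n : a <= b -> b <= n ->
  count (fun j => a <= j < b) (iota 0 n) = b - a.
Proof.
move=> Hab Hbn.
have := count_predUI (fun j => a <= j < b) (fun j => j < a) (iota 0 n).
rewrite (@eq_count _ (predU _ _) (fun j => j < b)); last first.
  by move=> j /=; case: (ltnP j a) => Hj /=; rewrite ?orbF ?(leq_trans Hj Hab).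
rewrite (@eq_count _ (predI _ _) pred0); last first.
  by move=> j /=; case: (ltnP j a) => _; rewrite ?andbF.
rewrite count_pred0 !count_lt_iota ?(leq_trans Hab Hbn) // addn0 => Hb.
by rewrite [b in RHS]Hb addnK.
Qed.

Lemma count_downclosed (p : pred nat) n :
  (forall a b, a <= b -> b < n -> p b -> p a) ->
  forall k, (k < count p (iota 0 n)) = (k < n) && p k.
Proof.
elim: n => [|n IH] down k; first by rewrite /= ltn0.
have down' : forall a b, a <= b -> b < n -> p b -> p a.
  by move=> a b ab /ltnW; apply: down.
have -> : iota 0 n.+1 = iota 0 n ++ [:: n] by rewrite -addn1 iotaD.
rewrite count_cat /= addn0.
case pn: (p n).
- have -> : count p (iota 0 n) = n.
    rewrite -[RHS](size_iota 0 n) -count_predT; apply: eq_in_count => j.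
    by rewrite mem_iota add0n /= => Hj; apply: (down j n) => //; apply: ltnW.
  rewrite addn1 ltnS; case: (leqP k n) => Hk //=.
  by rewrite (down k n).
- rewrite addn0 (IH down') ltnS [k <= n]leq_eqVlt.
  by case: (eqVneq k n) => [->|] /=; rewrite ?ltnn ?pn ?andbF.
Qed.

Section Distance.
Variables (T : finType) (e : rel T).

Definition walk k x y := exists p, [/\ size p = k, path e x p & last x p = y].

Lemma walkP k x y :
  reflect (walk k x y) [exists p : k.-tuple T, path e x p && (last x p == y)].
Proof.
apply: (iffP existsP) => [[p /andP[Hp /eqP Hl]] | [p [Hs Hp Hl]]].
  by exists p; rewrite size_tuple.
have Hs' : size p == k by rewrite Hs.
by exists (Tuple Hs'); rewrite /= Hp Hl eqxx.
Qed.

Lemma dist_le k x y : walk k x y -> dist e x y <= k.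
Proof.
move=> W; rewrite /dist; case: (ltnP k #|T|) => Hk.
  by apply: (@find_le _ _ _ 0); rewrite ?size_iota // nth_iota // add0n; apply/walkP.
by apply: leq_trans (find_size _ _) _; rewrite size_iota.
Qed.

Hypothesis e_connected : connected e.

Lemma dist_walk x y : walk (dist e x y) x y.
Proof.
have : has (fun k => [exists p : k.-tuple T, path e x p && (last x p == y)]) (iota 0 #|T|).
  have /connectP [p Hp ->] := e_connected x y.
  case: (shortenP Hp) => p' Hp' Up' _.
  apply/hasP; exists (size p'); last by apply/walkP; exists p'.
  have : size (x :: p') <= #|T| by rewrite -(card_uniqP Up') max_card.
  by rewrite mem_iota add0n.
move=> has_walk; have := nth_find 0 has_walk.
rewrite nth_iota ?add0n => [/walkP //|].
by rewrite -[X in _ < X](size_iota 0 #|T|) -has_find.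
Qed.

Lemma dist_self x : dist e x x = 0.
Proof. by apply/eqP; rewrite -leqn0; apply: dist_le; exists [::]. Qed.

Lemma dist0 x y : dist e x y = 0 -> x = y.
Proof. by move=> H; have [p [Hs _ <-]] := dist_walk x y; move: Hs; rewrite H; case: p. Qed.

Lemma dist_edge x u v : e u v -> dist e x v <= (dist e x u).+1.
Proof.
move=> Huv; have [p [Hs Hp Hl]] := dist_walk x u.
by apply: dist_le; exists (rcons p v); rewrite size_rcons last_rcons rcons_path Hp Hl Huv Hs.
Qed.

Lemma dist_pred x v : v != x -> exists u, e u v /\ (dist e x u).+1 = dist e x v.
Proof.
move=> Hv; have [p [Hs Hp Hl]] := dist_walk x v.
case/lastP: p Hs Hp Hl => [|p w] Hs Hp Hl; first by move: Hv; rewrite -Hl /= eqxx.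
move: Hp; rewrite rcons_path last_rcons in Hl * => /andP[Hp Hw]; subst w.
exists (last x p); split => //; apply/eqP; rewrite eqn_leq dist_edge // andbT.
by rewrite -Hs size_rcons ltnS; apply: dist_le; exists p.
Qed.

End Distance.

Section RootedTree.
Variables (T : finType) (e : rel T).
Hypotheses (e_sym : symmetric e) (e_irr : irreflexive e).
Hypotheses (e_connected : connected e) (e_acyclic : acyclic e).
Variable r : T.

Local Notation d := (dist e r).

Definition parent v := odflt r [pick u | e u v && ((d u).+1 == d v)].

Lemma parent_spec v : v != r -> e (parent v) v /\ (d (parent v)).+1 = d v.
Proof.
move=> Hv; rewrite /parent; case: pickP => [u /andP[H1 /eqP H2] | H] //=.
have [u [H1 H2]] := dist_pred e_connected Hv.
by move: (H u); rewrite H1 H2 eqxx.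
Qed.

Lemma dist_eq0 v : (d v == 0) = (v == r).
Proof. by apply/eqP/eqP => [/(dist0 e_connected) | ->]; last exact: dist_self. Qed.

Lemma dist_ancestor k v : k <= d v -> d (iter k parent v) = d v - k.
Proof.
elim: k => [|k IH] Hk; first by rewrite subn0.
have {}IH := IH (ltnW Hk).
have Hne : iter k parent v != r by rewrite -dist_eq0 IH subn_eq0 -ltnNge.
by have [_] := parent_spec Hne; rewrite iterS IH subnS => <-.
Qed.

Lemma ancestor_root v : iter (d v) parent v = r.
Proof. by apply/eqP; rewrite -dist_eq0 dist_ancestor // subnn. Qed.

(* Ancestors of two vertices at the same depth can only coincide at the same
   height, since height is read off the depth. *)
Lemma ancestor_height u w i j : d u = d w -> i <= d u -> j <= d u ->
  iter i parent u = iter j parent w -> i = j.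
Proof.
move=> Hd Hi Hj /(congr1 d); rewrite dist_ancestor // dist_ancestor -?Hd // Hd.
by move=> /eqP; rewrite eqn_sub2lE -?Hd // => /eqP.
Qed.

Lemma ancestors_uniq v n : n <= d v -> uniq (traject parent v n.+1).
Proof.
move=> Hn; rewrite looping_uniq; apply/negP => /trajectP [i Hi Heq].
have := @ancestor_height v v n i erefl Hn (leq_trans (ltnW Hi) Hn).
by rewrite Heq => /(_ erefl) Hni; move: Hi; rewrite Hni ltnn.
Qed.

Lemma ancestors_path v n : n <= d v -> path e v (traject parent (parent v) n).
Proof.
elim: n v => [|n IH] v Hn //.
have Hv : v != r by rewrite -dist_eq0 -lt0n (leq_trans _ Hn).
have [Hpv Hdv] := parent_spec Hv.
rewrite trajectS /= e_sym Hpv /=; apply: IH.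
by rewrite -ltnS Hdv.
Qed.

Lemma descendants_path v n : n <= d v ->
  path e (iter n parent v) (rev (traject parent v n)).
Proof.
elim: n => [|n IH] Hn //.
rewrite trajectSr rev_rcons /= IH ?(ltnW Hn) // andbT.
have Hv : iter n parent v != r.
  by rewrite -dist_eq0 dist_ancestor ?(ltnW Hn) // subn_eq0 -ltnNge.
by have [] := parent_spec Hv.
Qed.

(* Key use of acyclicity: two distinct vertices [u], [w] at the same depth
   cannot be joined by a walk [w, m, u] whose inner vertices [m] lie strictly
   deeper; otherwise climbing from [u] to the first common ancestor and back
   down to [w] would close a cycle. *)
Lemma no_deep_detour u w m : u != w -> d u = d w -> uniq m ->
  (forall x, x \in m -> d u < d x) -> ~~ path e w (rcons m u).
Proof.
move=> Huw Hd Um deep; apply/negP => Hwu.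
have ex : exists i, iter i parent u == iter i parent w.
  by exists (d u); rewrite {2}Hd !ancestor_root.
case: (ex_minnP ex) => [[|t]] /eqP meet tmin.
  by move: Huw; rewrite /= in meet; rewrite meet eqxx.
have Ht : t < d u by apply: tmin; rewrite {2}Hd !ancestor_root.
set U := traject parent u t.+2; set W := rev (traject parent w t.+1).
have inU x : x \in U -> exists2 i, i <= t.+1 & x = iter i parent u.
  by case/trajectP => i Hi ->; exists i.
have inW x : x \in W -> exists2 j, j <= t & x = iter j parent w.
  by rewrite mem_rev; case/trajectP => j Hj ->; exists j.
have shallowW x : x \in W -> d x <= d u.
  case/inW => j Hj ->; have Hjd : j <= d w by rewrite -Hd ltnW // (leq_ltn_trans Hj).
  by rewrite Hd dist_ancestor ?leq_subr.
have UW_disjoint x : x \in U -> x \in W -> False.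
  case/inU => i Hi -> /inW [j Hj Hij].
  have Hji := ancestor_height Hd (leq_trans Hi Ht) (leq_trans (leqW Hj) Ht) Hij.
  by subst j; have := tmin i; rewrite Hij eqxx ltnNge Hj => /(_ isT).
have U_shallow x : x \in U -> d x <= d u.
  by case/inU => i Hi ->; rewrite dist_ancestor ?leq_subr // (leq_trans Hi).
have cyc_uniq : uniq (U ++ W ++ m).
  have UU : uniq U := ancestors_uniq Ht.
  have UW : uniq W by rewrite rev_uniq; apply: ancestors_uniq; rewrite -Hd ltnW.
  rewrite cat_uniq (cat_uniq W m) UU UW Um andbT /=; apply/andP; split; apply/hasP => [[x]].
  - rewrite mem_cat => /orP [xW xU | xm /U_shallow]; first exact: UW_disjoint xU xW.
    by rewrite leqNgt deep.
  - by move=> xm /shallowW; rewrite leqNgt deep.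
have cyc_size : 3 <= size (U ++ W ++ m).
  by rewrite !size_cat /U /W size_rev !size_traject addSn addnS !ltnS leq_addr.
have := e_acyclic cyc_uniq cyc_size; apply/negP/negPn.
rewrite /U trajectS cat_cons /cycle !rcons_cat cat_path last_traject.
rewrite ancestors_path // meet /= cat_path.
have HW : path e (parent (iter t parent w)) W.
  by apply: (@descendants_path w t.+1); rewrite -Hd.
by rewrite HW /W trajectS rev_cons last_rcons.
Qed.

Lemma edge_dist_neq u w : e u w -> d u != d w.
Proof.
move=> Huw; apply/eqP => Hd.
have Hne : u != w by apply: contraTneq Huw => ->; rewrite e_irr.
apply: (negP (@no_deep_detour u w [::] Hne Hd isT _)) => //=.
by rewrite e_sym Huw.
Qed.

Lemma edge_dist u v : e u v -> (d u).+1 = d v \/ (d v).+1 = d u.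
Proof.
move=> Huv; have Hvu : e v u by rewrite e_sym.
move: (edge_dist_neq Huv) (dist_edge e_connected r Huv) (dist_edge e_connected r Hvu).
case: (ltngtP (d u) (d v)) => // Hlt _ H1 H2; [left | right].
- by apply/eqP; rewrite eqn_leq Hlt H1.
- by apply/eqP; rewrite eqn_leq Hlt H2.
Qed.

Lemma parent_unique u v : e u v -> (d u).+1 = d v -> u = parent v.
Proof.
move=> Huv Hdu; have Hv : v != r by rewrite -dist_eq0 -Hdu.
have [Hpv Hdp] := parent_spec Hv; apply/eqP/negP => /negP Hne.
have deep x : x \in [:: v] -> d u < d x by rewrite inE => /eqP ->; rewrite -Hdu.
have Hd : d u = d (parent v) by apply: succn_inj; rewrite Hdu Hdp.
have /negP := @no_deep_detour u (parent v) [:: v] Hne Hd isT deep.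
by rewrite /= Hpv e_sym Huv.
Qed.

Lemma tree_edge_parent x y :
  e x y = ((x != r) && (parent x == y)) || ((y != r) && (parent y == x)).
Proof.
apply/idP/idP => [Hxy | /orP[] /andP[Hr /eqP <-]]; last first.
- by have [] := parent_spec Hr.
- by have [] := parent_spec Hr; rewrite e_sym.
case: (edge_dist Hxy) => Hd.
- have Hy : y != r by rewrite -dist_eq0 -Hd.
  by rewrite Hy -(parent_unique Hxy Hd) eqxx orbT.
- have Hx : x != r by rewrite -dist_eq0 -Hd.
  by rewrite Hx -(parent_unique _ Hd) ?eqxx // e_sym.
Qed.

End RootedTree.

Section ParentGraph.
Variables (T : finType) (e : rel T) (r : T) (p : T -> T) (h : T -> nat).
Hypothesis parent_lower : forall v, v != r -> h (p v) < h v.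
Hypothesis e_parent :
  forall x y, e x y = ((x != r) && (p x == y)) || ((y != r) && (p y == x)).

Lemma deg_parent v : deg e v = (v != r) + #|[set u | (u != r) && (p u == v)]|.
Proof.
rewrite /deg; case: (eqVneq v r) => [->|Hv] /=.
  by rewrite add0n; apply: eq_card => u; rewrite !inE e_parent eqxx.
have -> : [set u | e v u] = p v |: [set u | (u != r) && (p u == v)].
  by apply/setP => u; rewrite !inE e_parent Hv /= eq_sym.
rewrite cardsU1; suff -> : p v \notin [set u | (u != r) && (p u == v)] by [].
rewrite inE; apply/negP => /andP[Hpv /eqP Hppv].
by have := ltn_trans (parent_lower Hpv) (parent_lower Hv); rewrite Hppv ltnn.
Qed.

Lemma sum_deg_parent : \sum_(v : T) deg e v = (#|T|.-1).*2.
Proof.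
under eq_bigr => v _ do rewrite deg_parent.
rewrite big_split /= -addnn -(cardsC1 r); congr (_ + _).
- rewrite (bigD1 r) //= eqxx add0n -sum1dep_card.
  by apply: eq_big => [x|x Hx]; rewrite ?inE ?Hx.
- rewrite -sum1dep_card [RHS](partition_big p predT) //=.
  by apply: eq_bigr => v _; rewrite sum1dep_card; apply: eq_card => u; rewrite !inE.
Qed.

End ParentGraph.

Lemma tree_degrees (T : finType) (e : rel T) : is_tree e ->
  \sum_(v : T) deg e v = (#|T|.-1).*2 /\ (1 < #|T| -> forall v, 0 < deg e v).
Proof.
move=> [Hn [[Hsym Hirr] [Hc Hac]]]; have [r _] := card_gt0P Hn.
have lower v : v != r -> dist e r (parent e r v) < dist e r v.
  by move=> Hv; have [_ <-] := parent_spec Hc Hv.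
have edges := tree_edge_parent Hsym Hirr Hc Hac r.
split=> [|big v]; first exact: sum_deg_parent lower edges.
rewrite (deg_parent lower edges); case: (eqVneq v r) => [->|//] /=.
have [u Hu] : exists u, u != r.
  have : 0 < #|[set~ r]| by rewrite cardsC1 -ltnS prednK.
  by case/card_gt0P => u; rewrite !inE => Hu; exists u.
have Hdu : 0 < dist e r u by rewrite lt0n (dist_eq0 Hc).
(* the ancestor of [u] at depth one is a child of the root *)
set w := iter (dist e r u).-1 (parent e r) u.
have Hdw : dist e r w = 1 by rewrite /w (dist_ancestor Hc) ?leq_pred // -subn1 subKn.
have Hw : w != r by rewrite -(dist_eq0 Hc) Hdw.
have [_] := parent_spec Hc Hw; rewrite Hdw => /succn_inj /eqP.
rewrite (dist_eq0 Hc) => /eqP Hpw.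
by apply/card_gt0P; exists w; rewrite inE Hw Hpw eqxx.
Qed.

(* If the [j] largest of [n] numbers are at least [m] and the others at most
   [m], the [j] largest have at least the average: [j * total <= n * P]. *)
Lemma average_le n j P R m : j <= n -> j * m <= P -> R <= (n - j) * m ->
  j * (P + R) <= n * P.
Proof.
move=> Hj HP HR; rewrite mulnDr -[X in _ <= X * P](subnKC Hj) mulnDl leq_add2l.
by apply: leq_trans (leq_mul (leqnn j) HR) _; rewrite mulnCA leq_mul2l HP orbT.
Qed.

(* Arithmetic of a nonincreasing sequence [d] of positive integers with sum
   [2(n-1)], [n = size d]: the degree sequence of a tree listed in BFD order. *)
Section SortedDegrees.
Variable d : seq nat.
Local Notation n := (size d).
Hypotheses (n_gt0 : 0 < n) (d_sorted : sorted geq d).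
Hypothesis d_sum : sumn d = (n.-1).*2.
Hypothesis d_pos : 1 < n -> forall k, k < n -> 0 < nth 0 d k.

(* [nchild i]: the number of children of the first [i] vertices, vertex [k]
   having [d_k] neighbours, all children except the parent when [k > 0]. *)
Definition nchild i := \sum_(0 <= k < i) (nth 0 d k - (0 < k)).
Definition prefix_sum i := \sum_(0 <= k < i) nth 0 d k.

(* [bfd_parent j]: the forced parent of vertex [j], namely the number of
   vertices [k] whose children all come before [j]. *)
Definition bfd_parent j := count (fun k => nchild k.+1 < j) (iota 0 n).

Lemma nchildS i : nchild i.+1 = nchild i + (nth 0 d i - (0 < i)).
Proof. by rewrite /nchild big_nat_recr. Qed.

Lemma nchild_mono i j : i <= j -> nchild i <= nchild j.
Proof.
move=> Hij; rewrite -(subnKC Hij); elim: (j - i) => [|k IH]; first by rewrite addn0.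
by rewrite addnS nchildS (leq_trans IH) ?leq_addr.
Qed.

Lemma nchild_prefix_sum i : 0 < i <= n -> nchild i + i.-1 = prefix_sum i.
Proof.
elim: i => [|i IH] // /andP[_ Hi].
case: (posnP i) => [->|Hi0]; first by rewrite /nchild /prefix_sum !big_nat1 /= subn0 addn0.
rewrite nchildS /prefix_sum big_nat_recr //= -/(prefix_sum i) -IH ?Hi0 ?(ltnW Hi) //.
have : 0 < nth 0 d i by apply: d_pos => //; apply: leq_ltn_trans Hi.
by rewrite subn1; lia.
Qed.

Lemma prefix_sum_all : prefix_sum n = (n.-1).*2.
Proof. by rewrite -d_sum sumnE (big_nth 0). Qed.

Lemma nchild_all : nchild n = n.-1.
Proof.
have := @nchild_prefix_sum n; rewrite n_gt0 leqnn prefix_sum_all -addnn.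
by move=> /(_ isT) /eqP; rewrite eqn_add2r => /eqP.
Qed.

Lemma nth_sorted k j : k <= j -> j < n -> nth 0 d j <= nth 0 d k.
Proof.
move=> Hkj Hj; have geq_trans : transitive geq by move=> a b c /[swap]; apply: leq_trans.
have := sorted_leq_nth geq_trans (fun x => leqnn x) 0 d_sorted.
by apply; rewrite ?inE // (leq_ltn_trans Hkj).
Qed.

Lemma prefix_average j : j < n -> j * prefix_sum n <= n * prefix_sum j.
Proof.
move=> Hj; set m := nth 0 d j; set R := \sum_(j <= k < n) nth 0 d k.
have head_big : j * m <= prefix_sum j.
  rewrite -[j in j * m]subn0 -sum_nat_const_nat /prefix_sum.
  rewrite big_nat_cond [X in _ <= X]big_nat_cond; apply: leq_sum => k /andP[/andP[_ Hk] _].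
  by apply: nth_sorted => //; apply: ltnW.
have tail_small : R <= (n - j) * m.
  rewrite /R -sum_nat_const_nat big_nat_cond [X in _ <= X]big_nat_cond.
  by apply: leq_sum => k /andP[/andP[Hk1 Hk2] _]; apply: nth_sorted.
have -> : prefix_sum n = prefix_sum j + R by rewrite /prefix_sum /R -big_cat_nat // ltnW.
exact: average_le (ltnW Hj) head_big tail_small.
Qed.

Lemma nchild_ge j : j < n -> j <= nchild j.
Proof.
move=> Hj; case: (posnP j) => [->|Hj0] //.
have := @nchild_prefix_sum j; rewrite Hj0 (ltnW Hj) => /(_ isT).
have := prefix_average Hj; rewrite prefix_sum_all -muln2.
move: (nchild j) (prefix_sum j) => C P HP HC; nia.
Qed.

Lemma bfd_parent_mono j j' : j <= j' -> bfd_parent j <= bfd_parent j'.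
Proof. by move=> Hj; apply: sub_count => k /= Hk; apply: leq_trans Hk Hj. Qed.

Lemma bfd_parent_lt j : 0 < j < n -> bfd_parent j < j.
Proof.
move=> /andP[Hj0 Hj].
apply: (@leq_ltn_trans (count (fun k => k < j.-1) (iota 0 n))).
  apply: sub_count => k /=; apply: contraTT; rewrite -!leqNgt => Hk.
  have Hjk : j <= k.+1 by rewrite -(prednK Hj0) ltnS.
  exact: leq_trans (nchild_ge Hj) (nchild_mono Hjk).
by rewrite count_lt_iota ?prednK // (leq_trans (leq_pred j)) // ltnW.
Qed.

Lemma bfd_parent_lt_n j : j < n -> bfd_parent j < n.
Proof.
move=> Hj; case: (posnP j) => [j0|Hj0].
  by apply: leq_ltn_trans Hj; rewrite j0 /bfd_parent (@eq_count _ _ pred0) ?count_pred0.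
have lt_j : bfd_parent j < j by apply: bfd_parent_lt; rewrite Hj0 Hj.
exact: ltn_trans lt_j Hj.
Qed.

Lemma bfd_parent_eq i j : i < n -> 0 < j < n ->
  (bfd_parent j == i) = (nchild i < j <= nchild i.+1).
Proof.
move=> Hi /andP[Hj0 Hj].
have down a b : a <= b -> b < n -> nchild b.+1 < j -> nchild a.+1 < j.
  by move=> Hab _; apply: leq_ltn_trans; apply: nchild_mono.
have threshold := count_downclosed down; rewrite -/bfd_parent in threshold.
rewrite eqn_leq [bfd_parent j <= i]leqNgt threshold Hi /= -leqNgt andbC.
congr (_ && _); case: (posnP i) => [->|Hi0]; first by rewrite /nchild big_geq.
by rewrite -(prednK Hi0) threshold prednK // (ltnW Hi).
Qed.

Lemma bfd_parent_children i : i < n ->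
  count (fun j => (0 < j) && (bfd_parent j == i)) (iota 0 n) = nth 0 d i - (0 < i).
Proof.
move=> Hi.
rewrite (@eq_in_count _ _ (fun j => (nchild i).+1 <= j < (nchild i.+1).+1)); last first.
  move=> j; rewrite mem_iota add0n /= => Hj.
  by case: (posnP j) => [->|Hj0] //=; rewrite bfd_parent_eq ?Hj0 ?Hj // ltnS.
have last_child : nchild i.+1 < n.
  by apply: leq_ltn_trans (nchild_mono Hi) _; rewrite nchild_all prednK.
by rewrite count_interval // ?ltnS ?nchild_mono // nchildS subSS addKn.
Qed.

End SortedDegrees.

Lemma tree_sorted_degrees (T : finType) (e : rel T) (pi : seq nat) :
  is_tree e -> perm_eq [seq deg e v | v <- enum T] pi ->
  let d := sort geq pi in
  [/\ size d = #|T|, 0 < size d, sorted geq d, sumn d = ((size d).-1).*2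
    & 1 < size d -> forall k, k < size d -> 0 < nth 0 d k].
Proof.
move=> Ht Hpi d; have [deg_sum deg_pos] := tree_degrees Ht.
have Hpd : perm_eq d (map (deg e) (enum T)) by rewrite perm_sort perm_sym.
have size_d : size d = #|T| by rewrite (perm_size Hpd) size_map cardE.
split=> //; first by rewrite size_d; case: Ht.
- by apply: sort_sorted => a b; apply: leq_total.
- by rewrite (perm_sumn Hpd) size_d -deg_sum sumnE big_map big_enum.
- move=> big k Hk; have : nth 0 d k \in map (deg e) (enum T).
    by rewrite -(perm_mem Hpd) mem_nth.
  by case/mapP => v _ ->; apply: deg_pos; rewrite -size_d.
Qed.

Section BFDOrdering.
Variables (T : finType) (e : rel T) (pi : seq nat).
Hypothesis e_tree : is_tree e.
Hypothesis e_degrees : perm_eq [seq deg e v | v <- enum T] pi.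
Variables (v0 : T) (s : seq T).
Hypothesis s_bfd : BFD_ordering e v0 s.

Let e_sym : symmetric e. Proof. by case: e_tree => _ [[]]. Qed.
Let e_irr : irreflexive e. Proof. by case: e_tree => _ [[]]. Qed.
Let e_connected : connected e. Proof. by case: e_tree => _ [_ []]. Qed.
Let e_acyclic : acyclic e. Proof. by case: e_tree => _ [_ []]. Qed.
Let s_uniq : uniq s. Proof. by case: s_bfd => [[[]]]. Qed.
Let s_all : forall x, x \in s. Proof. by case: s_bfd => [[[]]]. Qed.
Let s_head : head v0 s = v0. Proof. by case: s_bfd => [[]]. Qed.
Let s_dist : forall u v, prec s u v -> dist e v0 u <= dist e v0 v.
Proof. by case: s_bfd => [[]]. Qed.
Let s_queue : forall u v, u != v0 -> v != v0 -> prec s u v -> find (e u) s <= find (e v) s.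
Proof. by case: s_bfd => [[]]. Qed.
Let s_degrees : forall v u, prec s v u -> deg e u <= deg e v.
Proof. by case: s_bfd. Qed.

Local Notation d := (sort geq pi).
Local Notation n := (size s).
Local Notation pos x := (index x s).
Local Notation vx i := (nth v0 s i).
Local Notation par := (parent e v0).

Let par_edge x y :
  e x y = ((x != v0) && (par x == y)) || ((y != v0) && (par y == x)).
Proof. exact: tree_edge_parent e_sym e_irr e_connected e_acyclic v0 x y. Qed.

Lemma size_bfd : n = #|T|.
Proof. by rewrite -(card_uniqP s_uniq); apply: eq_card => x; rewrite s_all. Qed.

Lemma pos_lt x : pos x < n.
Proof. by rewrite index_mem. Qed.

Lemma pos_at i : i < n -> pos (vx i) = i.
Proof. by move=> Hi; rewrite index_uniq. Qed.

Lemma pos_eq0 x : (pos x == 0) = (x == v0).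
Proof.
have pos_v0 : pos v0 = 0 by move: (s_all v0) s_head; case: s => //= x' s' _ ->; rewrite eqxx.
by apply/eqP/eqP => [H|->] //; rewrite -(nth_index v0 (s_all x)) H -pos_v0 nth_index.
Qed.

Lemma pos_inj x y : (pos x == pos y) = (x == y).
Proof. by apply/eqP/eqP => [H|->] //; rewrite -(nth_index v0 (s_all x)) H nth_index. Qed.

Lemma count_positions (P : pred T) : count P s = count (fun k => P (vx k)) (iota 0 n).
Proof. by rewrite -[in LHS](mkseq_nth v0 s) /mkseq count_map. Qed.

Definition parent_pos k := pos (par (vx k)).

Lemma find_parent v : v != v0 -> find (e v) s = pos (par v).
Proof.
move=> Hv; have [Hpv Hdv] := parent_spec e_connected Hv.
apply: find_first => //; first by rewrite e_sym.
move=> y _; rewrite par_edge Hv /=.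
case/orP => [/eqP -> // | /andP [Hy /eqP Hpy]]; rewrite leqNgt; apply/negP => Hlt.
have [_ Hdy] := parent_spec e_connected Hy; move: (s_dist Hlt).
by rewrite -Hdy Hpy -Hdv ltnNge leqnSn.
Qed.

Lemma parent_pos_mono k l : 0 < k -> k <= l -> l < n -> parent_pos k <= parent_pos l.
Proof.
move=> Hk0 Hkl Hl; have Hk : k < n by apply: leq_ltn_trans Hl.
have nonroot i : 0 < i -> i < n -> vx i != v0 by move=> *; rewrite -pos_eq0 pos_at // -lt0n.
have Hl0 : 0 < l by apply: leq_trans Hkl.
move: Hkl; rewrite leq_eqVlt => /orP [/eqP -> // | Hlt].
rewrite /parent_pos -!find_parent ?nonroot //; apply: s_queue; rewrite ?nonroot //.
by rewrite /prec !pos_at.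
Qed.

(* By (B2), the degrees read along the ordering form the sorted sequence [d]. *)
Lemma deg_at i : i < n -> deg e (vx i) = nth 0 d i.
Proof.
move=> Hi; suff <- : [seq deg e v | v <- s] = d by rewrite (nth_map v0).
have geq_trans : transitive geq by move=> a b c /[swap]; apply: leq_trans.
apply: (sorted_eq geq_trans).
- by move=> a b /andP[H1 H2]; apply: anti_leq; rewrite /= in H1 H2; rewrite H1 H2.
- rewrite sorted_pairwise //; apply/(pairwiseP 0) => k l.
  rewrite !inE size_map => Hk Hl Hkl.
  by rewrite !(nth_map v0) //; apply: s_degrees; rewrite /prec !pos_at.
- by apply: sort_sorted => a b; apply: leq_total.
- have s_enum : perm_eq s (enum T).
    by apply: uniq_perm; rewrite ?enum_uniq // => x; rewrite s_all mem_enum.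
  apply: perm_trans (perm_trans (perm_map (deg e) s_enum) e_degrees) _.
  by rewrite perm_sym perm_sort.
Qed.

Lemma children_at i : i < n ->
  count (fun k => (0 < k) && (parent_pos k == i)) (iota 0 n) = nth 0 d i - (0 < i).
Proof.
move=> Hi; have lower v : v != v0 -> dist e v0 (par v) < dist e v0 v.
  by move=> Hv; have [_ <-] := parent_spec e_connected Hv.
have := deg_parent lower par_edge (vx i).
rewrite deg_at // (card_count _ s_uniq s_all) count_positions -pos_eq0 pos_at // -lt0n => ->.
rewrite addKn; apply: eq_in_count => k; rewrite mem_iota /= => Hk.
by rewrite -pos_eq0 pos_at // -lt0n /parent_pos -(pos_at Hi) pos_inj pos_at.
Qed.

Definition nparented i := count (fun k => (0 < k) && (parent_pos k < i)) (iota 0 n).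

(* Counting children vertex by vertex, [nparented] is [nchild d]. *)
Lemma nparented_nchild i : i <= n -> nparented i = nchild d i.
Proof.
elim: i => [|i IH] Hi.
  rewrite /nparented /nchild big_geq // (@eq_count _ _ pred0) ?count_pred0 //.
  by move=> k; rewrite andbF.
rewrite nchildS -IH ?(ltnW Hi) // -children_at // /nparented -count_predUI.
rewrite (@eq_count _ (predI _ _) pred0) ?count_pred0 ?addn0; last first.
  by move=> k /=; case: (0 < k) => //=; case: ltngtP.
by apply: eq_count => k /=; case: (0 < k) => //=; rewrite ltnS leq_eqVlt orbC.
Qed.

(* Parents are monotone, so the non-root vertices with parent among the first
   [i] vertices form an initial segment [1 .. nparented i]. *)
Lemma parent_pos_threshold j i : 0 < j < n -> (parent_pos j < i) = (j <= nparented i).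
Proof.
move=> /andP[Hj0 Hj]; pose p k := (k == 0) || (parent_pos k < i).
have down a b : a <= b -> b < n -> p b -> p a.
  rewrite /p; case: (posnP a) => [-> //|Ha0] Hab Hb /orP[/eqP Hb0|].
    by move: Hab; rewrite Hb0 leqn0 => /eqP Ha; rewrite Ha in Ha0.
  by move=> Hlt; apply/orP; right; apply: leq_ltn_trans Hlt; apply: parent_pos_mono.
have n_gt0 : 0 < n by apply: leq_trans Hj.
have count_p : count p (iota 0 n) = (nparented i).+1.
  rewrite /nparented; have -> : iota 0 n = 0 :: iota 1 n.-1 by rewrite -{1}(prednK n_gt0).
  rewrite /= /p add1n; congr _.+1.
  by apply: eq_in_count => k; rewrite mem_iota /= => /andP[Hk _]; rewrite eqn0Ngt Hk.
by move: (count_downclosed down j); rewrite count_p ltnS Hj /p eqn0Ngt Hj0.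
Qed.

Lemma parent_pos_forced j : 0 < j < n -> parent_pos j = bfd_parent d j.
Proof.
move=> Hj; have [Hd_n _ _ _ _] := tree_sorted_degrees e_tree e_degrees.
have Hsd : size d = n by rewrite Hd_n size_bfd.
have Hpj : parent_pos j < n by apply: pos_lt.
have below := parent_pos_threshold (parent_pos j) Hj.
have above := parent_pos_threshold (parent_pos j).+1 Hj.
rewrite ltnn leqNgt nparented_nchild ?(ltnW Hpj) // in below.
rewrite ltnSn nparented_nchild // in above.
apply/esym/eqP; rewrite bfd_parent_eq ?Hsd //.
by rewrite -above -[_ < j]negbK -below.
Qed.

Lemma bfd_edge x y : e x y =
  ((0 < pos x) && (bfd_parent d (pos x) == pos y)) ||
  ((0 < pos y) && (bfd_parent d (pos y) == pos x)).
Proof.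
have forced z w : z != v0 -> (bfd_parent d (pos z) == pos w) = (par z == w).
  move=> Hz; have Hpz : 0 < pos z < n by rewrite pos_lt andbT lt0n pos_eq0.
  by rewrite -parent_pos_forced // /parent_pos nth_index // pos_inj.
rewrite par_edge !lt0n !pos_eq0.
by case: (eqVneq x v0) => Hx; case: (eqVneq y v0) => Hy //=; rewrite ?forced.
Qed.

End BFDOrdering.

(* Uniqueness: matching the vertices of two BFD-trees with the same degree
   sequence position by position is an isomorphism. *)
Lemma bfd_trees_isomorphic (T : finType) (e1 e2 : rel T) (pi : seq nat) :
  perm_eq [seq deg e1 v | v <- enum T] pi -> perm_eq [seq deg e2 v | v <- enum T] pi ->
  BFD_tree e1 -> BFD_tree e2 ->
  exists f : T -> T, bijective f /\ forall x y, e1 x y = e2 (f x) (f y).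
Proof.
move=> D1 D2 [T1 [v1 [s1 B1]]] [T2 [v2 [s2 B2]]].
have index21 x : index (nth v2 s2 (index x s1)) s2 = index x s1.
  by rewrite (pos_at B2) // (size_bfd B2) -(size_bfd B1) (pos_lt B1).
have index12 y : index (nth v1 s1 (index y s2)) s1 = index y s2.
  by rewrite (pos_at B1) // (size_bfd B1) -(size_bfd B2) (pos_lt B2).
have in1 z : z \in s1 by rewrite -index_mem (pos_lt B1).
have in2 z : z \in s2 by rewrite -index_mem (pos_lt B2).
exists (fun x => nth v2 s2 (index x s1)); split.
  exists (fun y => nth v1 s1 (index y s2)) => z.
  - by rewrite index21 (nth_index _ (in1 z)).
  - by rewrite index12 (nth_index _ (in2 z)).
by move=> x y; rewrite (bfd_edge T1 D1 B1) (bfd_edge T2 D2 B2) !index21.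
Qed.

Section MonotoneParentTree.
Variables (N : nat) (r0 : 'I_N).
Hypothesis r0_val : val r0 = 0.
Variable Q : 'I_N -> 'I_N.
Hypothesis Q_lt : forall v, v != r0 -> Q v < v.
Hypothesis Q_mono : forall u v, u != r0 -> v != r0 -> u <= v -> Q u <= Q v.

Definition ptree (x y : 'I_N) : bool :=
  ((x != r0) && (Q x == y)) || ((y != r0) && (Q y == x)).

Lemma ptree_sym : symmetric ptree.
Proof. by move=> x y; rewrite /ptree orbC. Qed.

Lemma ptree_irr : irreflexive ptree.
Proof.
move=> x; rewrite /ptree orbb; apply/negP => /andP[Hx /eqP HQ].
by have := Q_lt Hx; rewrite HQ ltnn.
Qed.

Lemma ptree_Q v : v != r0 -> ptree v (Q v).
Proof. by move=> Hv; rewrite /ptree Hv eqxx. Qed.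

Lemma ptree_up u v : ptree u v -> u < v -> v != r0 /\ Q v = u.
Proof.
rewrite /ptree => /orP [/andP [Hu /eqP HQ] | /andP [Hv /eqP HQ]] // Huv.
by have := ltn_trans (Q_lt Hu) Huv; rewrite HQ ltnn.
Qed.

Lemma ptree_connected : connected ptree.
Proof.
have to_root x : connect ptree x r0.
  have [k] := ubnP (val x); elim: k x => [|k IH] x //; rewrite ltnS => Hx.
  case: (eqVneq x r0) => [->|Hxr]; first exact: connect0.
  apply: connect_trans (connect1 (ptree_Q Hxr)) (IH _ _).
  exact: leq_trans (Q_lt Hxr) Hx.
move=> x y; apply: connect_trans (to_root x) _.
by rewrite (sym_connect_sym ptree_sym).
Qed.

(* In a cycle, the largest vertex would have two distinct smaller
   neighbours, both equal to its parent. *)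
Lemma ptree_acyclic : acyclic ptree.
Proof.
move=> c Uc Hsz; apply/negP => Hcyc.
have [x0 x0c] : exists x, x \in c.
  by case: c Hsz {Uc Hcyc} => // x c' _; exists x; apply: mem_head.
case: (@arg_maxnP _ x0 (mem c) val x0c) => m mc mmax.
case: (rot_to mc) => i c' Hrot.
have : [/\ cycle ptree (m :: c'), uniq (m :: c') & 3 <= size (m :: c')].
  by rewrite -Hrot rot_cycle rot_uniq size_rot.
have below z : z \in c' -> z < m.
  move=> zc; have zc0 : z \in c by rewrite -(mem_rot i) Hrot inE zc orbT.
  have zm : z <= m := mmax z zc0.
  rewrite ltn_neqAle zm andbT; apply: contraTneq zc => /val_inj ->.
  by move: Uc; rewrite -(rot_uniq i) Hrot => /andP[].
case: c' Hrot below => [_ _ [] // | x q _ below [Hcyc' Uc' Hsz']].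
move: Hcyc' Uc' => /= /andP[Hmx]; rewrite rcons_path => /andP[_ Hym] /and3P[_ Hxq _].
case: q Hsz' Hxq Hym below => // z q _ Hxq Hym below.
have Hxm : ptree x m by rewrite ptree_sym.
have [_ Qmx] := ptree_up Hxm (below x (mem_head _ _)).
have [_ Qmy] := ptree_up Hym (below _ (mem_last _ _)).
by move: Hxq; rewrite -Qmx Qmy /= mem_last.
Qed.

Lemma ptree_nonroot (v : 'I_N) : (v != r0) = (0 < v).
Proof. by rewrite lt0n -r0_val -val_eqE. Qed.

Lemma ptree_tree : is_tree ptree.
Proof.
split; first by rewrite card_ord (leq_ltn_trans _ (ltn_ord r0)).
split; first by split; [exact: ptree_sym | exact: ptree_irr].
by split; [exact: ptree_connected | exact: ptree_acyclic].
Qed.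

Local Notation depth := (dist ptree r0).

Lemma depth_Q v : v != r0 -> (depth (Q v)).+1 = depth v.
Proof.
have [k] := ubnP (val v); elim: k v => [|k IH] v //; rewrite ltnS => Hvk Hv.
have HQv : ptree (Q v) v by rewrite ptree_sym ptree_Q.
have := edge_dist ptree_sym ptree_irr ptree_connected ptree_acyclic r0 HQv.
case=> // Hdeeper.
have HQr : Q v != r0 by rewrite -(dist_eq0 ptree_connected) -Hdeeper.
have HQQ : ptree (Q (Q v)) (Q v) by rewrite ptree_sym ptree_Q.
have := IH (Q v) (leq_trans (Q_lt Hv) Hvk) HQr.
move=> /(parent_unique ptree_sym ptree_connected ptree_acyclic HQQ).
rewrite -(parent_unique ptree_sym ptree_connected ptree_acyclic _ Hdeeper) ?ptree_Q //.
by move=> HQQv; have := ltn_trans (Q_lt HQr) (Q_lt Hv); rewrite HQQv ltnn.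
Qed.

Lemma depth_mono (u v : 'I_N) : u <= v -> depth u <= depth v.
Proof.
have [k] := ubnP (val v); elim: k u v => [|k IH] u v //; rewrite ltnS => Hvk Huv.
case: (eqVneq u r0) => [->|Hu]; first by rewrite dist_self.
have Hv : v != r0 by rewrite ptree_nonroot (leq_trans _ Huv) // -ptree_nonroot.
rewrite -(depth_Q Hu) -(depth_Q Hv) ltnS; apply: IH; last exact: Q_mono.
exact: leq_trans (Q_lt Hv) Hvk.
Qed.

Lemma find_ptree u : u != r0 -> find (ptree u) (enum 'I_N) = Q u.
Proof.
move=> Hu; rewrite -[RHS]index_enum_ord; apply: find_first.
- exact: enum_uniq.
- exact: mem_enum.
- exact: ptree_Q.
- move=> y _; rewrite !index_enum_ord /ptree Hu /=.
  case/orP => [/eqP -> // | /andP [Hy /eqP HQy]].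
  by apply: ltnW; apply: ltn_trans (Q_lt Hu) _; rewrite -{1}HQy; apply: Q_lt.
Qed.

Lemma child_ptree w v : child ptree r0 w v -> v != r0 /\ Q v = w.
Proof.
rewrite /child /ptree => /andP [/orP [/andP [Hw /eqP HQ] | /andP [Hv /eqP HQ]] /eqP Hd] //.
have := depth_Q Hw; rewrite HQ Hd => /eqP.
by rewrite -addn2 -[X in _ == X]addn0 eqn_add2l.
Qed.

Lemma ptree_BFD : (forall u v : 'I_N, u <= v -> deg ptree v <= deg ptree u) ->
  BFD_ordering ptree r0 (enum 'I_N).
Proof.
move=> deg_mono; split.
- split.
  + by split; [exact: enum_uniq | move=> v; exact: mem_enum].
  + apply: val_inj; rewrite /= -nth0 nth_enum_ord ?r0_val //.
    exact: leq_ltn_trans (leq0n _) (ltn_ord r0).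
  + by move=> u v; rewrite /prec !index_enum_ord => /ltnW; apply: depth_mono.
  + move=> u v Hu Hv; rewrite /prec !index_enum_ord !find_ptree // => /ltnW.
    exact: Q_mono.
- move=> w1 w2 v1 v2; rewrite /prec !index_enum_ord => Hw C1 C2.
  have [Hv1 HQ1] := child_ptree C1; have [Hv2 HQ2] := child_ptree C2.
  rewrite ltnNge; apply/negP => Hle.
  by have := Q_mono Hv2 Hv1 Hle; rewrite HQ1 HQ2 leqNgt Hw.
- by move=> v u; rewrite /prec !index_enum_ord => /ltnW; apply: deg_mono.
Qed.

End MonotoneParentTree.

Section ForcedTree.
Variable pi : seq nat.
Local Notation d := (sort geq pi).
Local Notation n := (size pi).
Hypotheses (d_gt0 : 0 < size d) (d_sorted : sorted geq d).
Hypothesis d_sum : sumn d = ((size d).-1).*2.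
Hypothesis d_pos : 1 < size d -> forall k, k < size d -> 0 < nth 0 d k.

Let size_d : size d = n. Proof. exact: size_sort. Qed.
Let n_gt0 : 0 < n. Proof. by rewrite -size_d. Qed.

Definition forced_root : 'I_n := Ordinal n_gt0.
Definition forced_parent (j : 'I_n) : 'I_n := insubd forced_root (bfd_parent d j).
Local Notation forced_tree := (ptree forced_root forced_parent).

Lemma forced_parent_val j : val (forced_parent j) = bfd_parent d j.
Proof.
have Hlt : bfd_parent d j < n.
  by have := bfd_parent_lt_n d_gt0 d_sorted d_sum d_pos (j := j); rewrite size_d; apply.
by rewrite val_insubd Hlt.
Qed.

Lemma forced_nonroot (v : 'I_n) : (v != forced_root) = (0 < v).
Proof. exact: ptree_nonroot. Qed.

Lemma forced_parent_lt v : v != forced_root -> forced_parent v < v.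
Proof.
rewrite forced_nonroot forced_parent_val => Hv.
by apply: (bfd_parent_lt d_gt0 d_sorted d_sum d_pos); rewrite Hv size_d /=.
Qed.

Lemma forced_parent_mono u v : u != forced_root -> v != forced_root ->
  u <= v -> forced_parent u <= forced_parent v.
Proof. by move=> _ _ Huv; rewrite !forced_parent_val bfd_parent_mono. Qed.

(* The vertex [v] receives [d_v - [v > 0]] children, hence has degree [d_v]. *)
Lemma forced_deg v : deg forced_tree v = nth 0 d v.
Proof.
rewrite (@deg_parent _ _ _ _ val forced_parent_lt) //.
rewrite (@card_count _ (enum 'I_n)) ?enum_uniq //; last by move=> x; rewrite mem_enum.
have -> : count (fun u => (u != forced_root) && (forced_parent u == v)) (enum 'I_n)
        = count (fun j => (0 < j) && (bfd_parent d j == v)) (iota 0 (size d)).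
  rewrite size_d -val_enum_ord count_map; apply: eq_count => u /=.
  by rewrite forced_nonroot -val_eqE /= forced_parent_val.
rewrite (bfd_parent_children d_gt0 d_sorted d_sum d_pos) ?size_d // forced_nonroot.
case: (posnP (val v)) => [_|Hv0]; first by rewrite subn0 add0n.
have Hv : val v < size d by rewrite size_d ltn_ord.
have d_v_pos : 0 < nth 0 d v by apply: d_pos; rewrite ?(leq_ltn_trans Hv0).
by rewrite /= add1n subn1 prednK.
Qed.

Lemma forced_tree_in_T_pi : in_T_pi forced_tree.
Proof.
split; first exact: ptree_tree forced_parent_lt.
rewrite /has_degree_seq (eq_map forced_deg) (map_comp (nth 0 d) val) val_enum_ord.
by rewrite -size_d -/(mkseq _ _) mkseq_nth perm_sort.
Qed.

Lemma forced_tree_BFD : BFD_tree forced_tree.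
Proof.
split; first exact: ptree_tree forced_parent_lt.
exists forced_root, (enum 'I_n); apply: ptree_BFD => //.
- exact: forced_parent_lt.
- exact: forced_parent_mono.
- by move=> u v Huv; rewrite !forced_deg nth_sorted // size_d.
Qed.

End ForcedTree.

Theorem lemma8 (pi : seq nat) :
  tree_sequence pi ->
  (exists e : rel 'I_(size pi), in_T_pi e /\ BFD_tree e) /\
  (forall e1 e2 : rel 'I_(size pi),
      in_T_pi e1 -> in_T_pi e2 -> BFD_tree e1 -> BFD_tree e2 ->
      isomorphic e1 e2).
Proof.
move=> [e0 [e0_tree e0_degrees]]; split.
  have [_ d_gt0 d_sorted d_sum d_pos] := tree_sorted_degrees e0_tree e0_degrees.
  exists (ptree (forced_root d_gt0) (forced_parent d_gt0)).
  by split; [exact: forced_tree_in_T_pi | exact: forced_tree_BFD].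
move=> e1 e2 [_ e1_degrees] [_ e2_degrees] e1_BFD e2_BFD.
exact: bfd_trees_isomorphic e1_degrees e2_degrees e1_BFD e2_BFD.
Qed.
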